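(* For every integer $n\ge1$, \[ \sum_{k=1}^{n}k\,\omega(n-k)=\sum_{\substack{m+k=n\\ m\ge1,\ k\ge0}}\phi(m)\,\Omega_m(k), \] where $\phi$ is Euler's totient function.
   Context: $\omega:\mathbb{Z}\to\mathbb{Z}$ is defined by $\omega(0)=1$; $\omega(m)=(-1)^j$ if $m=\frac{3j^2\pm j}{2}$ for some integer $j\ge1$; $\omega(m)=0$ otherwise (in particular for $m<0$). For $m\ge1$ and integer $k$, $\Omega_m(k)=\sum_{j\ge0}\omega(k-jm)=\omega(k)+\omega(k-m)+\omega(k-2m)+\cdots$. *)

From mathcomp Require Import all_boot all_algebra.
Set Implicit Arguments. Unset Strict Implicit. Unset Printing Implicit Defensive.
Import GRing.Theory Num.Theory.
Local Open Scope ring_scope.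

Definition is_gpent (m : int) (j : nat) : bool :=
  (0 < j)%N && ((2 * m == (3 * j ^ 2 + j)%N%:Z) || (2 * m == (3 * j ^ 2 - j)%N%:Z)).

(* omega(0) = 1; omega(m) = (-1)^j if m = (3j^2 +- j)/2 with j >= 1; 0 otherwise.
   Any such j satisfies j <= m, so a search over j in [1, m] is exhaustive;
   the j is unique (generalized pentagonal numbers are distinct). *)
Definition omega (m : int) : int :=
  if m == 0 then 1
  else if m < 0 then 0
  else let M := `|m|%N in
       match [seq j <- iota 1 M | is_gpent m j] with
       | j :: _ => (-1) ^+ j
       | [::] => 0
       end.

(* Omega_m(k) = sum_{j >= 0} omega(k - j m).  For m >= 1 and k >= 0 all terms with
   j > k have k - j m < 0, hence vanish, so the sum over 0 <= j <= k is the full sum. *)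
Definition Omega (m : nat) (k : int) : int :=
  \sum_(0 <= j < `|k|.+1) omega (k - (j * m)%N%:Z).

(* Since k is the sum of phi(m) over the divisors m of k, the left-hand side
   equals the sum of phi(m) omega(n - k) over pairs m | k <= n.  Grouping by m
   and writing k = j m turns the inner sum into omega(n - m) + omega(n - 2m) + ...,
   which is Omega_m(n - m). *)

From mathcomp Require Import all_boot all_algebra.
From mathcomp Require Import cyclic zify.
Import GRing.Theory Num.Theory.
Local Open Scope ring_scope.

Lemma omega_lt0 (x : int) : x < 0 -> omega x = 0.
Proof. by move=> x_lt0; rewrite /omega x_lt0 (negbTE (ltr0_neq0 x_lt0)). Qed.

Lemma sum_totient_dvd_nat (n k : nat) : (0 < k <= n)%N ->
  (\sum_(1 <= m < n.+1 | (m %| k)%N) totient m)%N = k.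
Proof.
case/andP=> k_gt0 le_kn.
have {2}<- : (\sum_(0 <= m < k.+1 | (m %| k)%N) totient m)%N = k.
  by rewrite big_mkord sum_totient_dvd.
rewrite (@big_nat_widen _ _ _ 0 k.+1 n.+1) // [RHS]big_ltn_cond // dvd0n.
rewrite (negbTE (lt0n_neq0 k_gt0)); apply: eq_bigl => m.
by case: (boolP (m %| k)%N) => //= /(dvdn_leq k_gt0); rewrite ltnS => ->.
Qed.

Section VanishingOnNegatives.

Variable f : int -> int.
Hypothesis f_lt0 : forall x, x < 0 -> f x = 0.

Lemma sum_multiples (n m : nat) : (0 < m)%N ->
  \sum_(1 <= j < n.+1) f (n%:Z - (j * m)%N%:Z) =
  \sum_(1 <= k < n.+1 | (m %| k)%N) f (n%:Z - k%:Z).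
Proof.
move=> m_gt0.
transitivity (\sum_(1 <= j < n.+1)
                \sum_(1 <= k < n.+1 | k == (j * m)%N) f (n%:Z - k%:Z)).
  apply: eq_big_nat => j /andP[j_gt0 _]; rewrite big_nat1_eq.
  case: ifP => // /negbT; rewrite negb_and => jm_out.
  by apply: f_lt0; rewrite subr_lt0 ltz_nat; move: jm_out; lia.
under eq_bigr do rewrite big_mkcond /=.
rewrite exchange_big_nat /= [RHS]big_mkcond /=.
apply: eq_big_nat => k /andP[k_gt0 k_le]; rewrite -big_mkcond /=.
have [/dvdnP[q k_eq]|m_ndvd] := boolP (m %| k)%N.
  subst k.
  rewrite (eq_bigl (pred1 q)) ?big_nat1_eq; last first.
    by move=> j /=; rewrite eqn_mul2r eqn0Ngt m_gt0.
  by rewrite ifT //; apply/andP; split; nia.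
rewrite big_pred0 // => j; apply/negbTE/eqP => k_eq.
by move: m_ndvd; rewrite k_eq dvdn_mull.
Qed.

Lemma sum_weighted_by_totient (n : nat) :
  \sum_(1 <= k < n.+1) (k%:Z * f (n%:Z - k%:Z))
  = \sum_(1 <= m < n.+1)
      ((totient m)%:Z * \sum_(1 <= j < n.+1) f (n%:Z - (j * m)%N%:Z)).
Proof.
transitivity (\sum_(1 <= k < n.+1) \sum_(1 <= m < n.+1 | (m %| k)%N)
                (totient m)%:Z * f (n%:Z - k%:Z)).
  apply: eq_big_nat => k k_range; rewrite -mulr_suml.
  by rewrite -(big_morph Posz PoszD (erefl 0%:Z)) sum_totient_dvd_nat.
under eq_bigr do rewrite big_mkcond /=.
rewrite exchange_big_nat /=; apply: eq_big_nat => m /andP[m_gt0 _].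
by rewrite -big_mkcond sum_multiples // mulr_sumr.
Qed.

End VanishingOnNegatives.

Lemma Omega_subn (n m : nat) : (0 < m <= n)%N ->
  Omega m (n - m)%N%:Z = \sum_(1 <= j < n.+1) omega (n%:Z - (j * m)%N%:Z).
Proof.
case/andP=> m_gt0 le_mn; rewrite /Omega absz_nat big_add1 /=.
rewrite [RHS](@big_cat_nat _ _ _ (n - m).+1 0 n) //=; last by lia.
rewrite [X in _ = _ + X]big1_seq ?addr0; last first.
  move=> j /andP[_]; rewrite mem_index_iota => /andP[j_gt _].
  by apply: omega_lt0; rewrite subr_lt0 ltz_nat; nia.
by apply: eq_big_nat => j _; congr omega; lia.
Qed.

Theorem mainTheorem6 (n : nat) (hn : (1 <= n)%N) :
  \sum_(1 <= k < n.+1) (k%:Z * omega (n%:Z - k%:Z))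
  = \sum_(1 <= m < n.+1) ((totient m)%:Z * Omega m (n - m)%N%:Z).
Proof.
rewrite (sum_weighted_by_totient _ omega_lt0).
by apply: eq_big_nat => m m_range; rewrite Omega_subn.
Qed.
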